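(* Let $\mathcal C$ be a $\tau$-graded category with shifts and let $S$ be a homogeneous simple object. Put $L_S=\{a\in H: S\langle a\rangle\cong S \text{ (via a degree-1 isomorphism)}\}$. Then $L_S$ is a subgroup of $\ker(\tau)$. Fix coset representatives $(h_i)_{i\in I}$ with $H=\coprod_{i\in I}h_iL_S$, and let $H$ act on $I$ by $h_{ai}L_S=ah_iL_S$. For all $i\in I$, $a\in H$ the $R$-module $\mathrm{Hom}^a_{\mathcal C}(S\langle h_i\rangle,S\langle h_{ai}\rangle)$ is free of rank one; choose generators $f^a_{S,i}$ with $f^1_{S,i}=\mathrm{id}_{S\langle h_i\rangle}$. Then there is a unique function $\psi_S\colon H^2\to\mathrm{Hom}_{\mathrm{Set}}(H/L_S,R^\times)$ with $$f^{ab}_{S,i}=\psi_S(a,b)(h_iL_S)\cdot f^a_{S,bi}\circ f^b_{S,i}\quad\text{for all }a,b\in H,\ i\in I,$$ and $\psi_S$ is a normalised 2-cocycle.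
   Context: $R$ is a nonzero commutative ring, $H,G$ groups, $\tau\colon H\to G$ a homomorphism. A $\tau$-graded category is an $R$-linear category $\mathcal C$ with $\mathrm{Hom}(X,Y)=\bigoplus_{h\in H}\mathrm{Hom}^h(X,Y)$, identities of degree 1, composition $\mathrm{Hom}^{h'}\times\mathrm{Hom}^h\to\mathrm{Hom}^{h'h}$, such that the degree-1 subcategory $\mathcal C^1$ is $G$-graded (disjoint full subcategories $\mathcal C_g$, every object a finite direct sum of objects of the $\mathcal C_g$; objects of $\mathcal C_g$ are homogeneous, $|X|=g$) and $\mathrm{Hom}^h(X,Y)=0$ for homogeneous $X,Y$ unless $|Y|=\tau(h)|X|$. A shift of $X$ by $a\in H$ is an object $X\langle a\rangle$ with a degree-$a$ isomorphism $r_{X,a}\colon X\to X\langle a\rangle$; $\mathcal C$ has shifts if these exist for all $X,a$ (fix a choice). An object $S$ is simple if $\mathrm{End}_{\mathcal C^1}(S)\cong R$ as $R$-algebras. $\mathrm{Hom}_{\mathrm{Set}}(H/L,R^\times)$ is an abelian group under pointwise product with right $H$-action $(f\triangleleft h)(kL)=f(hkL)$; $1$ is the constant function; a normalised 2-cocycle is $\psi\colon H^2\to\mathrm{Hom}_{\mathrm{Set}}(H/L,R^\times)$ with $\psi(1,h)=\psi(h,1)=1$ and $\psi(b,c)\psi(ab,c)^{-1}\psi(a,bc)(\psi(a,b)\triangleleft c)^{-1}=1$. *)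

From HB Require Import structures.
From mathcomp Require Import all_boot all_algebra.
From Stdlib Require Import JMeq. From Stdlib Require List.
Set Implicit Arguments. Unset Strict Implicit. Unset Printing Implicit Defensive.
Import GRing.Theory.
Local Open Scope ring_scope.

Record group := Group {
  gcar :> Type;
  gmul : gcar -> gcar -> gcar;
  gone : gcar;
  ginv : gcar -> gcar;
  gmulA : forall x y z, gmul x (gmul y z) = gmul (gmul x y) z;
  gmul1x : forall x, gmul gone x = x;
  gmulx1 : forall x, gmul x gone = x;
  gmulVx : forall x, gmul (ginv x) x = gone;
  gmulxV : forall x, gmul x (ginv x) = gone }.
Arguments gmul {g}. Arguments gone {g}. Arguments ginv {g}.

Definition is_group_hom (H G : group) (tau : H -> G) :=
  forall a b, tau (gmul a b) = gmul (tau a) (tau b).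

(* Mor X Y is the full R-module of morphisms; [homdeg h f] says that
   f lies in the homogeneous component Mor^h(X,Y);
   [grade X = Some g] says X is an object of C_g (homogeneous, |X| = g). *)
Record tgcat (R : comUnitRingType) (H G : group) (tau : H -> G) := TGCat {
  Obj : Type;
  Mor : Obj -> Obj -> lmodType R;
  mcomp : forall X Y Z, Mor Y Z -> Mor X Y -> Mor X Z;
  idm : forall X, Mor X X;
  homdeg : forall X Y, H -> Mor X Y -> Prop;
  grade : Obj -> option G;
  shift : Obj -> H -> Obj;
  rsh : forall X a, Mor X (shift X a);
  comp_linl : forall X Y Z (f : Mor X Y) (r : R) (g1 g2 : Mor Y Z),
      mcomp (r *: g1 + g2) f = r *: mcomp g1 f + mcomp g2 f;
  comp_linr : forall X Y Z (g : Mor Y Z) (r : R) (f1 f2 : Mor X Y),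
      mcomp g (r *: f1 + f2) = r *: mcomp g f1 + mcomp g f2;
  compA : forall X Y Z W (f : Mor X Y) (g : Mor Y Z) (k : Mor Z W),
      mcomp k (mcomp g f) = mcomp (mcomp k g) f;
  comp1f : forall X Y (f : Mor X Y), mcomp (idm Y) f = f;
  compf1 : forall X Y (f : Mor X Y), mcomp f (idm X) = f;
  (* Mor(X,Y) = (+)_h Mor^h(X,Y) as R-modules *)
  homdeg0 : forall X Y h, homdeg h (0 : Mor X Y);
  homdeg_lin : forall X Y h (r : R) (f g : Mor X Y),
      homdeg h f -> homdeg h g -> homdeg h (r *: f + g);
  homdeg_span : forall X Y (f : Mor X Y), exists s : seq (H * Mor X Y)%type,
      (forall p, List.In p s -> homdeg p.1 p.2) /\ f = \sum_(p <- s) p.2;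
  homdeg_indep : forall X Y (s : seq (H * Mor X Y)%type),
      List.NoDup (map fst s) -> (forall p, List.In p s -> homdeg p.1 p.2) ->
      \sum_(p <- s) p.2 = 0 -> forall p, List.In p s -> p.2 = 0;
  idm_deg : forall X, homdeg gone (idm X);
  comp_deg : forall X Y Z h h' (f : Mor X Y) (g : Mor Y Z),
      homdeg h f -> homdeg h' g -> homdeg (gmul h' h) (mcomp g f);
  (* C^1 is G-graded: every object is a finite direct sum (in C^1)
     of homogeneous objects *)
  grade_decomp : forall X, exists n (Y : 'I_n -> Obj)
      (i : forall k, Mor (Y k) X) (p : forall k, Mor X (Y k)),
      [/\ forall k, grade (Y k) <> None,
          forall k, homdeg gone (i k) /\ homdeg gone (p k),
          forall k, mcomp (p k) (i k) = idm (Y k),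
          forall k l, k <> l -> mcomp (p k) (i l) = 0
        & \sum_(k < n) mcomp (i k) (p k) = idm X];
  grade_hom : forall X Y g g' h (f : Mor X Y),
      grade X = Some g -> grade Y = Some g' -> homdeg h f ->
      g' <> gmul (tau h) g -> f = 0;
  rsh_deg : forall X a, homdeg a (rsh X a);
  rsh_iso : forall X a, exists g : Mor (shift X a) X,
      mcomp g (rsh X a) = idm X /\ mcomp (rsh X a) g = idm (shift X a) }.

Arguments tgcat : clear implicits.
Arguments Obj {R H G tau}.
Arguments Mor {R H G tau} t.
Arguments mcomp {R H G tau} t {X Y Z}.
Arguments idm {R H G tau} t X.
Arguments homdeg {R H G tau} t {X Y}.
Arguments grade {R H G tau} t.
Arguments shift {R H G tau} t.
Arguments rsh {R H G tau} t.

Section Defs.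
Variables (R : comUnitRingType) (H G : group) (tau : H -> G)
          (C : tgcat R H G tau).

Definition deg_iso (h : H) (X Y : Obj C) :=
  exists (f : Mor C X Y) (g : Mor C Y X),
    [/\ homdeg C h f, mcomp C g f = idm C X & mcomp C f g = idm C Y].

(* End_{C^1}(S) is isomorphic to R as R-algebras *)
Definition simple (S : Obj C) :=
  exists phi : Mor C S S -> R,
    [/\ forall (r : R) (f g : Mor C S S), homdeg C gone f -> homdeg C gone g ->
          phi (r *: f + g) = r * phi f + phi g,
        forall f g : Mor C S S, homdeg C gone f -> homdeg C gone g ->
          phi (mcomp C f g) = phi f * phi g,
        phi (idm C S) = 1,
        forall f g : Mor C S S, homdeg C gone f -> homdeg C gone g ->
          phi f = phi g -> f = g
      & forall r : R, exists2 f, homdeg C gone f & phi f = r].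

Definition homogeneous (S : Obj C) := exists g, grade C S = Some g.

Definition LS (S : Obj C) (a : H) : Prop := deg_iso gone (shift C S a) S.

Definition subgroup_of_ker (L : H -> Prop) :=
  [/\ L gone, forall a b, L a -> L b -> L (gmul a b),
      forall a, L a -> L (ginv a) & forall a, L a -> tau a = gone].

Definition free_rank1 (X Y : Obj C) (P : Mor C X Y -> Prop) :=
  exists b, P b /\ forall x, P x -> exists! r : R, x = r *: b.

Definition generates (X Y : Obj C) (P : Mor C X Y -> Prop) (b : Mor C X Y) :=
  P b /\ forall x, P x -> exists r : R, x = r *: b.
End Defs.

(* elements of Hom_Set(H/L, R^x), represented as L-right-invariant maps H -> R
   (f(k l) = f(k) for l in L, i.e. functions on left cosets kL) with unit values *)
Definition coset_unit_fun (R : comUnitRingType) (H : group) (L : H -> Prop)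
  (u : H -> R) :=
  (forall k l, L l -> u (gmul k l) = u k) /\ (forall k, u k \is a GRing.unit).

(* normalised 2-cocycle H^2 -> Hom_Set(H/L, R^x), right action (f<|h)(kL)=f(hkL) *)
Definition normalised_cocycle (R : comUnitRingType) (H : group)
  (psi : H -> H -> H -> R) :=
  [/\ forall h k, psi gone h k = 1, forall h k, psi h gone k = 1
    & forall a b c k, psi b c k * (psi (gmul a b) c k)^-1 * psi a (gmul b c) k
                        * (psi a b (gmul c k))^-1 = 1].

From Pilot Require Import Defs.
From HB Require Import structures.
From mathcomp Require Import all_boot all_algebra.
From Stdlib Require Import JMeq. From Stdlib Require List.
From Stdlib Require Import Classical ClassicalEpsilon.
From mathcomp Require Import ring.
Import GRing.Theory.
Local Open Scope ring_scope.
Set Implicit Arguments. Unset Strict Implicit. Unset Printing Implicit Defensive.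

(* Since Hom is the direct sum of its homogeneous components, the inverse of a
   degree-d isomorphism has degree d^-1.  So a degree-h isomorphism e : X -> Y
   out of an object homogeneously isomorphic to S identifies Hom^h(X, Y) with
   End_{C^1}(S) = R: it is free of rank one on e, and its generators are the
   unit multiples of e.  Hence every f^a_{S,i} is an isomorphism, and
   f^a_{S,bi} o f^b_{S,i} and f^{ab}_{S,i} generate the same rank-one module,
   which defines psi_S(a,b) on coset representatives; it is extended to be
   constant on cosets, and comparing the two bracketings of f^{abc}_{S,i}
   gives the cocycle identity.  Finally L_S lies in ker tau: for a in L_S the
   composite S -> S<a> -> S is a nonzero morphism of degree a between
   homogeneous objects, which forces tau(a)|S| = |S|. *)

Section GroupTheory.
Variable K : group.
Implicit Types x y : K.

Lemma gmulKg x y : gmul (ginv x) (gmul x y) = y.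
Proof. by rewrite gmulA gmulVx gmul1x. Qed.

Lemma gmulKVg x y : gmul x (gmul (ginv x) y) = y.
Proof. by rewrite gmulA gmulxV gmul1x. Qed.

Lemma gmulgK x y : gmul (gmul y x) (ginv x) = y.
Proof. by rewrite -gmulA gmulxV gmulx1. Qed.

Lemma ginv_unique x y : gmul x y = gone -> ginv x = y.
Proof. by move=> xy1; rewrite -(gmulKg x y) xy1 gmulx1. Qed.

Lemma ginvM x y : ginv (gmul x y) = gmul (ginv y) (ginv x).
Proof. by apply: ginv_unique; rewrite gmulA gmulgK gmulxV. Qed.

Lemma ginvK x : ginv (ginv x) = x.
Proof. by apply: ginv_unique; rewrite gmulVx. Qed.

Lemma ginv1 : ginv (@gone K) = gone.
Proof. by apply: ginv_unique; rewrite gmul1x. Qed.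

Lemma gmul_eq_idl x y : gmul x y = y -> x = gone.
Proof. by move=> xyy; rewrite -(gmulgK y x) xyy gmulxV. Qed.

End GroupTheory.

Section GradedCategory.
Variables (R : comUnitRingType) (H G : group) (tau : H -> G)
  (C : tgcat R H G tau).
Local Notation comp := (mcomp C).
Local Notation hd := (homdeg C).

Lemma mcomp0r X Y Z (g : Mor C Y Z) : comp g (0 : Mor C X Y) = 0.
Proof.
have := comp_linr g 1 (0 : Mor C X Y) 0; rewrite !scale1r addr0 => g00.
by apply: (@addrI _ (comp g 0)); rewrite addr0 -g00.
Qed.

Lemma mcomp0l X Y Z (f : Mor C X Y) : comp (0 : Mor C Y Z) f = 0.
Proof.
have := comp_linl f 1 (0 : Mor C Y Z) 0; rewrite !scale1r addr0 => f00.
by apply: (@addrI _ (comp 0 f)); rewrite addr0 -f00.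
Qed.

Lemma mcompDr X Y Z (g : Mor C Y Z) (f1 f2 : Mor C X Y) :
  comp g (f1 + f2) = comp g f1 + comp g f2.
Proof. by have := comp_linr g 1 f1 f2; rewrite !scale1r. Qed.

Lemma mcompZr X Y Z (g : Mor C Y Z) r (f : Mor C X Y) :
  comp g (r *: f) = r *: comp g f.
Proof. by have := comp_linr g r f 0; rewrite !addr0 mcomp0r addr0. Qed.

Lemma mcompZl X Y Z (f : Mor C X Y) r (g : Mor C Y Z) :
  comp (r *: g) f = r *: comp g f.
Proof. by have := comp_linl f r g 0; rewrite !addr0 mcomp0l addr0. Qed.

Lemma mcomp_sumr X Y Z (g : Mor C Y Z) T (s : seq T) (P : pred T)
    (F : T -> Mor C X Y) :
  comp g (\sum_(t <- s | P t) F t) = \sum_(t <- s | P t) comp g (F t).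
Proof. by apply: (big_morph (comp g)); [exact: mcompDr | exact: mcomp0r]. Qed.

Lemma homdegZ X Y h r (f : Mor C X Y) : hd h f -> hd h (r *: f).
Proof. by move=> hf; have := homdeg_lin r hf (homdeg0 _ _ h); rewrite addr0. Qed.

Lemma homdegD X Y h (f g : Mor C X Y) : hd h f -> hd h g -> hd h (f + g).
Proof. by move=> hf hg; have := homdeg_lin 1 hf hg; rewrite scale1r. Qed.

Definition decide (P : Prop) : bool :=
  if excluded_middle_informative P then true else false.

Lemma decideP P : reflect P (decide P).
Proof. by rewrite /decide; case: excluded_middle_informative => ?; constructor. Qed.

Lemma homdeg_sum X Y h (s : seq (H * Mor C X Y)) (P : pred (H * Mor C X Y)) :
  (forall p, List.In p s -> P p -> hd h p.2) -> hd h (\sum_(p <- s | P p) p.2).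
Proof.
elim: s => [|p s IHs] hs; first by rewrite big_nil; exact: homdeg0.
have {}IHs := IHs (fun q sq => hs q (or_intror sq)).
rewrite big_cons; case: ifP => // Pp.
by apply: homdegD IHs; exact: hs p (or_introl erefl) Pp.
Qed.

Lemma homdeg_sum_uniq X Y (s : seq (H * Mor C X Y)) :
  (forall p, List.In p s -> hd p.1 p.2) ->
  exists s', [/\ List.NoDup (map fst s'),
    forall p, List.In p s' -> hd p.1 p.2 /\ List.In p.1 (map fst s)
  & \sum_(p <- s') p.2 = \sum_(p <- s) p.2].
Proof.
elim: s => [|p s IHs] hs; first by exists [::]; split => //; constructor.
have [s' [nd hs' sum']] := IHs (fun q sq => hs q (or_intror sq)).
have hp := hs p (or_introl erefl).
have [[q [s'q qp]] | s'p] :=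
  classic (exists q, List.In q s' /\ q.1 = p.1); last first.
  exists (p :: s'); split; last by rewrite !big_cons sum'.
  - constructor => // /List.in_map_iff [q [qp s'q]]; apply: s'p; by exists q.
  - move=> r /= [<- | s'r]; first by split; [exact: hp | left].
    by have [? ?] := hs' r s'r; split => //; right.
have [l1 [l2 s'E]] := List.in_split q s' s'q.
exists (l1 ++ (q.1, q.2 + p.2) :: l2); split.
- by move: nd; rewrite s'E !map_cat.
- move=> r /List.in_app_iff [l1r | [<- | l2r]].
  + have [] := hs' r; first by rewrite s'E; apply: List.in_or_app; left.
    by split => //; right.
  + split => /=; last by right; exact: (hs' q s'q).2.
    by apply: homdegD; [exact: (hs' q s'q).1 | rewrite qp].
  + have [] := hs' r; first by rewrite s'E; apply: List.in_or_app; right; right.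
    by split => //; right.
- rewrite big_cons -sum' s'E !big_cat !big_cons /=.
  by rewrite [p.2 + _]addrCA [q.2 + p.2]addrC -addrA.
Qed.

Lemma homdeg_sum_other_eq0 X Y c (x : Mor C X Y) (s : seq (H * Mor C X Y)) :
  hd c x -> (forall p, List.In p s -> hd p.1 p.2 /\ p.1 <> c) ->
  x = \sum_(p <- s) p.2 -> x = 0.
Proof.
move=> hx hs xE.
have [s' [nd hs' sum']] := homdeg_sum_uniq (fun p sp => (hs p sp).1).
suff: (c, - x).2 = 0 by move=> /= /eqP; rewrite oppr_eq0 => /eqP.
apply: (homdeg_indep (s := (c, - x) :: s')); last by left.
- constructor => // /List.in_map_iff [q [qc s'q]].
  have [_ /List.in_map_iff [p [pq sp]]] := hs' q s'q.
  by have [_] := hs p sp; rewrite pq qc.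
- move=> p /= [<- | s'p]; last exact: (hs' p s'p).1.
  by rewrite /= -scaleN1r; exact: homdegZ.
- by rewrite big_cons /= sum' -xE addNr.
Qed.

(* Split g into its degree-d^-1 part g1 and the rest g2: e o g2 = 1 - e o g1
   has degree 1 but is a sum of components of other degrees, so it vanishes. *)
Lemma homdeg_inv X Y d (e : Mor C X Y) (g : Mor C Y X) : hd d e ->
  comp g e = idm C X -> comp e g = idm C Y -> hd (ginv d) g.
Proof.
move=> he ge eg.
have [s [hs gE]] := homdeg_span g.
pose P (p : H * Mor C Y X) := decide (p.1 = ginv d).
set g1 := \sum_(p <- s | P p) p.2; set g2 := \sum_(p <- s | ~~ P p) p.2.
have g12 : g = g1 + g2 by rewrite gE (bigID P).
have hg1 : hd (ginv d) g1.
  by apply: homdeg_sum => p sp /decideP <-; exact: hs.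
have eg2 : comp e g2 = 0.
  apply: (homdeg_sum_other_eq0 (c := gone)
    (s := [seq (gmul d p.1, comp e p.2) | p <- s & ~~ P p])).
  - have -> : comp e g2 = (-1) *: comp e g1 + idm C Y.
      by rewrite -eg g12 mcompDr scaleN1r addKr.
    apply: homdeg_lin (idm_deg _).
    by have := comp_deg hg1 he; rewrite gmulxV.
  - move=> q /List.in_map_iff [p [<- /List.filter_In [sp /decideP nPp]]].
    split; first exact: comp_deg (hs p sp) he.
    by move=> /ginv_unique dp; apply: nPp; rewrite dp.
  - by rewrite big_map big_filter mcomp_sumr.
have g20 : g2 = 0 by rewrite -[g2]comp1f -ge -Defs.compA eg2 mcomp0r.
by rewrite g12 g20 addr0.
Qed.

Definition homiso X Y d (e : Mor C X Y) := hd d e /\ exists e' : Mor C Y X,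
  [/\ hd (ginv d) e', comp e' e = idm C X & comp e e' = idm C Y].

Lemma homisoP X Y d (e : Mor C X Y) e' : hd d e ->
  comp e' e = idm C X -> comp e e' = idm C Y -> homiso d e.
Proof.
by move=> he e'e ee'; split=> //; exists e'; split=> //; exact: homdeg_inv he e'e ee'.
Qed.

Lemma homiso_inv X Y d (e : Mor C X Y) : homiso d e ->
  exists e', [/\ homiso (ginv d) e', comp e' e = idm C X & comp e e' = idm C Y].
Proof.
by case=> he [e' [he' e'e ee']]; exists e'; split=> //; split=> //; exists e; rewrite ginvK.
Qed.

Lemma homiso_comp X Y Z d d' (e : Mor C X Y) (e' : Mor C Y Z) :
  homiso d e -> homiso d' e' -> homiso (gmul d' d) (comp e' e).
Proof.
case=> he [ei [hei eie eei]] [he' [ei' [hei' eie' eei']]].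
split; first exact: comp_deg he he'.
exists (comp ei ei'); split.
- by rewrite ginvM; exact: comp_deg hei' hei.
- by rewrite !Defs.compA -(Defs.compA e' ei' ei) eie' compf1 eie.
- by rewrite !Defs.compA -(Defs.compA ei e e') eei compf1 eei'.
Qed.

Lemma homiso_rsh X a : homiso a (rsh C X a).
Proof. by have [g [gr rg]] := rsh_iso X a; apply: homisoP gr rg; exact: rsh_deg. Qed.

Lemma homisoZ X Y d (e : Mor C X Y) r : homiso d e -> r \is a GRing.unit ->
  homiso d (r *: e).
Proof.
case=> he [ei [hei eie eei]] r_unit; split; first exact: homdegZ.
exists (r^-1 *: ei); split; first exact: homdegZ.
- by rewrite mcompZl mcompZr scalerA mulVr // scale1r.
- by rewrite mcompZl mcompZr scalerA mulrV // scale1r.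
Qed.

Lemma JMeq_mcomp X Y Y' Z Z' (g : Mor C Y Z) (g' : Mor C Y' Z')
    (f : Mor C X Y) (f' : Mor C X Y') :
  Y = Y' -> Z = Z' -> JMeq g g' -> JMeq f f' -> JMeq (comp g f) (comp g' f').
Proof.
by move=> YY' ZZ'; subst Y' Z' => gg' ff'; rewrite (JMeq_eq gg') (JMeq_eq ff').
Qed.

Lemma JMeq_scale X Y Y' (f : Mor C X Y) (f' : Mor C X Y') r :
  Y = Y' -> JMeq f f' -> JMeq (r *: f) (r *: f').
Proof. by move=> YY'; subst Y' => ff'; rewrite (JMeq_eq ff'). Qed.

Section SimpleObject.
Variables (S : Obj C) (S_simple : simple S).

Lemma simple_scalar (y : Mor C S S) : hd gone y -> exists! r : R, y = r *: idm C S.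
Proof.
case: S_simple => phi [phi_lin _ phi1 phi_inj _] hy.
have phi0 : phi 0 = 0.
  have := phi_lin 1 0 0 (homdeg0 _ _ _) (homdeg0 _ _ _).
  rewrite scale1r addr0 mul1r => phi00.
  by apply: (@addrI _ (phi 0)); rewrite addr0 -phi00.
have phiZ r : phi (r *: idm C S) = r.
  have := phi_lin r (idm C S) 0 (idm_deg _) (homdeg0 _ _ _).
  by rewrite addr0 phi1 mulr1 phi0 addr0.
exists (phi y); split; last by move=> r ->; rewrite phiZ.
by apply: phi_inj; [exact: hy | exact: homdegZ (idm_deg _) | rewrite phiZ].
Qed.

Lemma simple_idm_neq0 : idm C S <> 0.
Proof.
move=> S0; have [r [_ r_uniq]] := simple_scalar (idm_deg S).
have r1 : r = 1 by apply: r_uniq; rewrite scale1r.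
have r0 : r = 0 by apply: r_uniq; rewrite S0 scaler0.
by have := oner_neq0 R; rewrite -r1 r0 eqxx.
Qed.

(* Conjugating by u and e turns Hom^h(X, Y) into End_{C^1}(S). *)
Lemma homdeg_rank1 X Y d h (u : Mor C X S) (e : Mor C X Y) :
  homiso d u -> homiso h e -> forall y, hd h y -> exists! r : R, y = r *: e.
Proof.
case=> hu [ui [hui uiu uui]] [he [ei [hei eie eei]]] y hy.
have hz : hd gone (comp u (comp ei (comp y ui))).
  have := comp_deg (comp_deg (comp_deg hui hy) hei) hu.
  by rewrite gmulKg gmulxV.
have [r [zE r_uniq]] := simple_scalar hz.
exists r; split.
  have eiy : comp ei (comp y ui) = r *: ui.
    by rewrite -[LHS]comp1f -uiu -Defs.compA zE mcompZr compf1.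
  have -> : y = comp e (comp (comp ei (comp y ui)) u).
    by rewrite !Defs.compA eei comp1f -Defs.compA uiu compf1.
  by rewrite eiy mcompZl mcompZr uiu compf1.
move=> r' yE; apply: r_uniq.
by rewrite yE mcompZl !mcompZr (Defs.compA ui e ei) eie comp1f uui.
Qed.

Lemma homiso_scale_inj X Y d h (u : Mor C X S) (e : Mor C X Y) r r' :
  homiso d u -> homiso h e -> r *: e = r' *: e -> r = r'.
Proof.
move=> hu he re.
have [c [_ c_uniq]] := homdeg_rank1 hu he (homdegZ r he.1).
by rewrite -(c_uniq r) // -(c_uniq r').
Qed.

Lemma generator_unit_scale X Y d h (u : Mor C X S) (e : Mor C X Y) b :
  homiso d u -> homiso h e -> generates (hd h) b ->
  exists c, c \is a GRing.unit /\ b = c *: e.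
Proof.
move=> hu he [hb b_gen].
have [c [bE _]] := homdeg_rank1 hu he hb.
have [t eE] := b_gen e he.1.
have tc1 : t * c = 1.
  by apply: (homiso_scale_inj hu he); rewrite scale1r -scalerA -bE -eE.
by exists c; split => //; apply/unitrPr; exists t; rewrite mulrC.
Qed.

End SimpleObject.

Section ShiftStabiliser.
Variables (S : Obj C) (S_simple : simple S) (S_homog : homogeneous S).

Lemma LS_homiso a : LS S a <-> exists u : Mor C (shift C S a) S, homiso gone u.
Proof.
split; first by case=> u [ui [hu uiu uui]]; exists u; exact: homisoP hu uiu uui.
by case=> u [hu [ui [_ uiu uui]]]; exists u, ui.
Qed.

Lemma homiso_unshift a : exists ri : Mor C (shift C S a) S, homiso (ginv a) ri.
Proof. by have [ri [hri _ _]] := homiso_inv (homiso_rsh S a); exists ri. Qed.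

Lemma LS1 : LS S gone.
Proof.
by apply/LS_homiso; have [ri] := homiso_unshift gone; rewrite ginv1; exists ri.
Qed.

Lemma LSM a b : LS S a -> LS S b -> LS S (gmul a b).
Proof.
move=> /LS_homiso [u hu] /LS_homiso [v hv]; apply/LS_homiso.
have [ri hri] := homiso_unshift (gmul a b).
exists (comp u (comp (rsh C S a) (comp v (comp (rsh C S b) ri)))).
have := homiso_comp (homiso_comp (homiso_comp (homiso_comp hri
  (homiso_rsh S b)) hv) (homiso_rsh S a)) hu.
by rewrite ginvM gmulKVg !gmul1x gmulxV.
Qed.

Lemma LSV a : LS S a -> LS S (ginv a).
Proof.
move=> /LS_homiso [u hu]; apply/LS_homiso.
have [ui [hui _ _]] := homiso_inv hu.
have [ri hri] := homiso_unshift a; have [ri' hri'] := homiso_unshift (ginv a).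
exists (comp ri (comp ui ri')).
have := homiso_comp (homiso_comp hri' hui) hri.
by rewrite ginvK ginv1 gmul1x gmulVx.
Qed.

Lemma LS_ker a : LS S a -> tau a = gone.
Proof.
move=> /LS_homiso [u hu]; case: S_homog => g Sg.
have hz := homiso_comp (homiso_rsh S a) hu; rewrite gmul1x in hz.
apply: NNPP => tau_a_neq1.
have z0 : comp u (rsh C S a) = 0.
  by apply: (grade_hom Sg Sg hz.1) => /esym /gmul_eq_idl.
case: hz => _ [zi [_ ziz _]]; apply: (simple_idm_neq0 S_simple).
by rewrite -ziz z0 mcomp0r.
Qed.

Lemma LS_subgroup_ker : subgroup_of_ker tau (LS S).
Proof. by split; [exact: LS1 | exact: LSM | exact: LSV | exact: LS_ker]. Qed.

Section CosetRepresentatives.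
Variables (I : Type) (hr : I -> H).
Hypothesis hr_part : forall a : H, exists! i : I, LS S (gmul (ginv (hr i)) a).
Variable act : H -> I -> I.
Hypothesis act_def : forall a i, LS S (gmul (ginv (hr (act a i))) (gmul a (hr i))).
Local Notation Sh i := (shift C S (hr i)).

Lemma hr_uniq x i j :
  LS S (gmul (ginv (hr i)) x) -> LS S (gmul (ginv (hr j)) x) -> i = j.
Proof.
move=> hi hj; have [i0 [_ i0_uniq]] := hr_part x.
by rewrite -(i0_uniq i) // -(i0_uniq j).
Qed.

Lemma actM a b i : act (gmul a b) i = act a (act b i).
Proof.
apply: (hr_uniq (x := gmul (gmul a b) (hr i))); first exact: act_def.
by have := LSM (act_def a (act b i)) (act_def b i); rewrite !gmulA gmulgK.
Qed.

Lemma act1 i : act gone i = i.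
Proof.
apply: (hr_uniq (x := hr i)); first by have := act_def gone i; rewrite gmul1x.
by rewrite gmulVx; exact: LS1.
Qed.

Lemma homiso_shift_act a i : exists e : Mor C (Sh i) (Sh (act a i)), homiso a e.
Proof.
have /LS_homiso [w hw] := act_def a i.
have [ri hri] := homiso_unshift (hr i).
exists (comp (rsh C S (hr (act a i))) (comp w (comp (rsh C S _) ri))).
have := homiso_comp (homiso_comp (homiso_comp hri (homiso_rsh S _)) hw)
  (homiso_rsh S (hr (act a i))).
by rewrite gmul1x -gmulA gmulgK gmulKVg.
Qed.

Lemma free_rank1_shift_act a i :
  free_rank1 (homdeg C (X := Sh i) (Y := Sh (act a i)) a).
Proof.
have [u hu] := homiso_unshift (hr i); have [e he] := homiso_shift_act a i.
by exists e; split=> [|x hx]; [exact: he.1 | exact (homdeg_rank1 S_simple hu he hx)].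
Qed.

Variable f : forall a i, Mor C (Sh i) (Sh (act a i)).
Hypothesis f_gen : forall a i, generates (homdeg C a) (f a i).
Hypothesis f1 : forall i, JMeq (f gone i) (idm C (Sh i)).

Lemma homiso_f a i : homiso a (f a i).
Proof.
have [u hu] := homiso_unshift (hr i); have [e he] := homiso_shift_act a i.
have [c [c_unit ->]] := generator_unit_scale S_simple hu he (f_gen a i).
exact: homisoZ.
Qed.

Definition is_coef a b i (c : R) :=
  JMeq (f (gmul a b) i) (c *: comp (f a (act b i)) (f b i)).

Lemma coef_exists a b i : exists c, c \is a GRing.unit /\ is_coef a b i c.
Proof.
have [u hu] := homiso_unshift (hr i).
have hfab := homiso_comp (homiso_f b i) (homiso_f a (act b i)).
(* act (gmul a b) i occurs in the type of f (gmul a b) i, so abstract it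
   before rewriting it to act a (act b i). *)
rewrite /is_coef; move: (f (gmul a b) i) (f_gen (gmul a b) i).
move: (act (gmul a b) i) (actM a b i) => j -> x x_gen.
by have [c [c_unit ->]] := generator_unit_scale S_simple hu hfab x_gen; exists c.
Qed.

Lemma coef_uniq a b i c c' : is_coef a b i c -> is_coef a b i c' -> c = c'.
Proof.
move=> c_coef c'_coef; have [u hu] := homiso_unshift (hr i).
apply: (homiso_scale_inj S_simple hu
  (homiso_comp (homiso_f b i) (homiso_f a (act b i)))).
exact: JMeq_eq (JMeq_trans (JMeq_sym c_coef) c'_coef).
Qed.

Definition coef_rep a b i : R :=
  proj1_sig (constructive_indefinite_description _ (coef_exists a b i)).

Lemma coef_repP a b i :
  coef_rep a b i \is a GRing.unit /\ is_coef a b i (coef_rep a b i).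
Proof. exact: proj2_sig (constructive_indefinite_description _ (coef_exists a b i)). Qed.

Lemma coef_rep1l b i : coef_rep gone b i = 1.
Proof.
apply: coef_uniq (proj2 (coef_repP _ _ _)) _; rewrite /is_coef scale1r.
rewrite gmul1x; apply: JMeq_sym; rewrite -[X in JMeq _ X]comp1f.
by apply: JMeq_mcomp => //; rewrite act1.
Qed.

Lemma coef_rep1r a i : coef_rep a gone i = 1.
Proof.
apply: coef_uniq (proj2 (coef_repP _ _ _)) _; rewrite /is_coef scale1r.
rewrite gmulx1; apply: JMeq_sym; rewrite -[X in JMeq _ X]compf1.
by apply: JMeq_mcomp; rewrite ?act1.
Qed.

(* Both bracketings of f^{abc}_i are multiples of f^a_{bci} o f^b_{ci} o f^c_i. *)
Lemma coef_repA a b c i :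
  coef_rep (gmul a b) c i * coef_rep a b (act c i)
  = coef_rep a (gmul b c) i * coef_rep b c i.
Proof.
have [_ abc_coef] := coef_repP (gmul a b) c i.
have [_ ab_coef] := coef_repP a b (act c i).
have [_ abc_coef'] := coef_repP a (gmul b c) i.
have [_ bc_coef] := coef_repP b c i.
set fabc := comp (comp (f a (act b (act c i))) (f b (act c i))) (f c i).
have abcE : JMeq (f (gmul (gmul a b) c) i)
    ((coef_rep (gmul a b) c i * coef_rep a b (act c i)) *: fabc).
  apply: JMeq_trans abc_coef _; rewrite -scalerA.
  apply: JMeq_scale; first by rewrite actM.
  rewrite /fabc -mcompZl.
  by apply: JMeq_mcomp ab_coef (JMeq_refl _) => //; rewrite actM.
have abcE' : JMeq (f (gmul (gmul a b) c) i)
    ((coef_rep a (gmul b c) i * coef_rep b c i) *: fabc).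
  rewrite -gmulA; apply: JMeq_trans abc_coef' _; rewrite -scalerA.
  apply: JMeq_scale; first by rewrite actM.
  rewrite /fabc -Defs.compA -mcompZr.
  by apply: JMeq_mcomp _ bc_coef; rewrite ?actM.
have [u hu] := homiso_unshift (hr i).
apply: (homiso_scale_inj S_simple hu (homiso_comp (homiso_f c i)
  (homiso_comp (homiso_f b (act c i)) (homiso_f a (act b (act c i)))))).
exact: JMeq_eq (JMeq_trans (JMeq_sym abcE) abcE').
Qed.

Definition coset_idx (k : H) : I :=
  proj1_sig (constructive_indefinite_description _ (hr_part k)).

Lemma coset_idxP k : LS S (gmul (ginv (hr (coset_idx k))) k).
Proof. exact: proj1 (proj2_sig (constructive_indefinite_description _ (hr_part k))). Qed.

Lemma coset_idx_hr i : coset_idx (hr i) = i.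
Proof. by apply: (hr_uniq (coset_idxP (hr i))); rewrite gmulVx; exact: LS1. Qed.

Lemma coset_idxMr k l : LS S l -> coset_idx (gmul k l) = coset_idx k.
Proof.
move=> Ll; apply: (hr_uniq (coset_idxP _)).
by rewrite gmulA; exact: LSM (coset_idxP k) Ll.
Qed.

Lemma coset_idxMl c k : coset_idx (gmul c k) = act c (coset_idx k).
Proof.
apply: (hr_uniq (coset_idxP _)).
by have := LSM (act_def c (coset_idx k)) (coset_idxP k); rewrite !gmulA gmulgK.
Qed.

Definition coef a b k : R := coef_rep a b (coset_idx k).

Lemma coef_coset_unit_fun a b : coset_unit_fun (LS S) (coef a b).
Proof.
split=> [k l Ll | k]; first by rewrite /coef coset_idxMr.
exact: (coef_repP a b _).1.
Qed.

Lemma coef_hr a b i : is_coef a b i (coef a b (hr i)).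
Proof. by rewrite /coef coset_idx_hr; exact: (coef_repP a b i).2. Qed.

Lemma coef_unique (psi : H -> H -> H -> R) :
  (forall a b, coset_unit_fun (LS S) (psi a b)) ->
  (forall a b i, is_coef a b i (psi a b (hr i))) ->
  forall a b k, psi a b k = coef a b k.
Proof.
move=> psi_coset psi_coef a b k.
have [psi_inv _] := psi_coset a b.
rewrite -[k in LHS](gmulKVg (hr (coset_idx k)) k) psi_inv; last exact: coset_idxP.
exact: coef_uniq (psi_coef _ _ _) (coef_repP _ _ _).2.
Qed.

Lemma coef_normalised_cocycle : normalised_cocycle coef.
Proof.
split=> [b k | a k | a b c k]; rewrite /coef ?coef_rep1l ?coef_rep1r //.
rewrite coset_idxMl; set i := coset_idx k.
have [uB _] := coef_repP (gmul a b) c i; have [uD _] := coef_repP a b (act c i).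
have := coef_repA a b c i.
set A := coef_rep b c i; set B := coef_rep _ c i; set Cc := coef_rep a _ i.
set D := coef_rep a b _ => BD_CcA.
have -> : A / B * Cc / D = (Cc * A) / (B * D) by rewrite invrM //; ring.
by rewrite -BD_CcA mulrV // unitrM uB.
Qed.

End CosetRepresentatives.
End ShiftStabiliser.
End GradedCategory.

Theorem mainTheorem9 (R : comUnitRingType) (H G : group) (tau : H -> G)
  (tau_hom : is_group_hom tau) (C : tgcat R H G tau) (S : Obj C)
  (S_homog : homogeneous S) (S_simple : simple S) :
  subgroup_of_ker tau (LS S) /\
  forall (I : Type) (hr : I -> H)
    (hr_part : forall a : H, exists! i : I, LS S (gmul (ginv (hr i)) a))
    (act : H -> I -> I)
    (act_def : forall a i, LS S (gmul (ginv (hr (act a i))) (gmul a (hr i)))),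
    (forall a i, free_rank1 (homdeg C (X := shift C S (hr i))
                                      (Y := shift C S (hr (act a i))) a)) /\
    forall f : forall a i, Mor C (shift C S (hr i)) (shift C S (hr (act a i))),
      (forall a i, generates (homdeg C a) (f a i)) ->
      (forall i, JMeq (f gone i) (idm C (shift C S (hr i)))) ->
      exists psi : H -> H -> H -> R,
        [/\ forall a b, coset_unit_fun (LS S) (psi a b),
            forall a b i, JMeq (f (gmul a b) i)
                               (psi a b (hr i) *: mcomp C (f a (act b i)) (f b i)),
            forall psi' : H -> H -> H -> R,
              (forall a b, coset_unit_fun (LS S) (psi' a b)) ->
              (forall a b i, JMeq (f (gmul a b) i)
                               (psi' a b (hr i) *: mcomp C (f a (act b i)) (f b i))) ->
              forall a b k, psi' a b k = psi a b k
          & normalised_cocycle psi].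
Proof.
split; first exact: (LS_subgroup_ker S_simple S_homog).
move=> I hr hr_part act act_def.
split; first exact: (free_rank1_shift_act S_simple act_def).
move=> f f_gen f1.
exists (coef S_simple hr_part act_def f_gen); split.
- exact: (coef_coset_unit_fun S_simple hr_part act_def f_gen).
- exact: (coef_hr S_simple hr_part act_def f_gen).
- exact: (coef_unique S_simple hr_part act_def f_gen).
- exact: (coef_normalised_cocycle S_simple hr_part act_def f_gen f1).
Qed.
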